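(* Let $K$ be a field of characteristic $p>0$ and $A^*$ a graded Hopf algebra over $K$ with a decreasing filtration satisfying (E1), (E2), (E3), (E4), (E6), (E7), (E8), and let $M^*$ be an unstable $A^*$-module. Then: (1) $\Sigma^{-1}\operatorname{Coker}\lambda_{M^*}$ is an unstable $A^*$-module; (2) if moreover the filtration satisfies (E9), then $\Sigma^{-1}\operatorname{Ker}\lambda_{M^*}$ is an unstable $A^*$-module.
   Context: Let $A^*$ be a graded Hopf algebra over a field $K$ of characteristic $p$, with product $\mu$ and a decreasing filtration $(F_iA^* )_{i\in\mathbb Z}$ by graded subspaces; $E_i^jA^*=(F_iA^* )^j/(F_{i+1}A^* )^j$. A left $A^*$-module $M^*$ with structure map $\alpha$ is unstable if $\alpha(F_{n+1}A^*\otimes M^n)=0$ for all $n$; then $\alpha$ induces $\bar\alpha_{M,n}\colon A^*/F_{n+1}A^*\otimes M^n\to M^*$. $(\Sigma^nV^* )^i=V^{i-n}$. Conditions: (E1) $F_iA^*=A^*$ for $i\le0$; (E2) $\bigcap_iF_iA^*=0$; (E3) each $F_iA^*$ is a left ideal; (E4) $\mu(F_iA^*\otimes A^j)\subset F_{i-j}A^*$; (E6) $E_{2i+\varepsilon}^kA^*=0$ if $k<2i(p-1)+\varepsilon$ or $2i+\varepsilon+k\not\equiv0,2\pmod{2p}$ ($i,k\in\mathbb Z$, $\varepsilon\in\{0,1\}$); (E7) $\dim E_{2i+\varepsilon}^{2i(p-1)+\varepsilon}A^*=1$ for $i\ge0$; (E8) for $i,j\ge0$, $\varepsilon\in\{0,1\}$,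 the map $\tilde\mu_{2i+\varepsilon}^{2i(p-1)+\varepsilon,j}\colon E_{2i+\varepsilon}^{2i(p-1)+\varepsilon}A^*\otimes(A^*/F_{2i-j+\varepsilon+1}A^* )^j\to E_{2i-j+\varepsilon}^{2i(p-1)+j+\varepsilon}A^*$, $[a]\otimes[b]\mapsto[ab]$, is an isomorphism. For $i,j\ge0$, $\varepsilon\in\{0,1\}$ put $\kappa=\varepsilon$ if $j$ is even and $\kappa=1-\varepsilon$ if $j$ is odd, and let $\gamma_{i,j,\varepsilon}$ be the composite of the map $A^{pj-(p-2)(\varepsilon-\kappa)}\otimes E_{2i-j+\varepsilon}^{(2i-j+\varepsilon-\kappa)(p-1)+\kappa}A^*\to E_{2i-j+\varepsilon}^{2i(p-1)+j+\varepsilon}A^*$ induced by left multiplication with $(\tilde\mu_{2i+\varepsilon}^{2i(p-1)+\varepsilon,j})^{-1}$. (E9): for every $k$, $\gamma_{i,j,\varepsilon}$ maps $(F_kA^* )^{pj-(p-2)(\varepsilon-\kappa)}\otimes E_{2i-j+\varepsilon}^{(2i-j+\varepsilon-\kappa)(p-1)+\kappa}A^*$ into $E_{2i+\varepsilon}^{2i(p-1)+\varepsilon}A^*\otimes(F_{\lceil k/p\rceil}A^*/F_{2i-j+\varepsilon+1}A^* )^j$. The module $\Phi M^*$: as a graded vector space $(\Phi M^* )^{2ip+2\varepsilon}=E_{2i+\varepsilon}^{2i(p-1)+\varepsilon}A^*\otimes M^{2i+\varepsilon}$ and $(\Phi M^* )^k=0$ for $k\not\equiv0,2\pmod{2p}$;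 the $A^*$-action is given on homogeneous pieces by: $A^{2jp}\otimes E_{2i+\varepsilon}^{2i(p-1)+\varepsilon}A^*\otimes M^{2i+\varepsilon}\to E_{2(i+j)+\varepsilon}^{2(i+j)(p-1)+\varepsilon}A^*\otimes M^{2(i+j)+\varepsilon}$ equal to $(1\otimes\bar\alpha_{M,2i+\varepsilon})\circ(\gamma_{i+j,2j,\varepsilon}\otimes1)$; $A^{2jp+2}\otimes E_{2i}^{2i(p-1)}A^*\otimes M^{2i}\to E_{2(i+j)+1}^{2(i+j)(p-1)+1}A^*\otimes M^{2(i+j)+1}$ equal to $(1\otimes\bar\alpha_{M,2i})\circ(\gamma_{i+j,2j+1,1}\otimes1)$; $A^{2jp-2}\otimes E_{2i+1}^{2i(p-1)+1}A^*\otimes M^{2i+1}\to E_{2(i+j)}^{2(i+j)(p-1)}A^*\otimes M^{2(i+j)}$ equal to $(1\otimes\bar\alpha_{M,2i+1})\circ(\gamma_{i+j,2j-1,0}\otimes1)$; all other components are zero. $\lambda_M\colon\Phi M^*\to M^*$ is given by $[a]\otimes x\mapsto ax$ on $E_{2i+\varepsilon}^{2i(p-1)+\varepsilon}A^*\otimes M^{2i+\varepsilon}$; it is a homomorphism of $A^*$-modules, so its kernel and cokernel are $A^*$-modules. *)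

From HB Require Import structures.
From mathcomp Require Import all_boot all_order all_algebra.
Set Implicit Arguments. Unset Strict Implicit. Unset Printing Implicit Defensive.
Import Order.TTheory GRing.Theory Num.Theory.
Local Open Scope ring_scope.

(* (only ever used when i = j holds; the 0 branch is never reached).        *)
Definition gcast (K : fieldType) (V : int -> lmodType K) (i j : int) (x : V i)
  : V j :=
  match @eqP _ i j with
  | ReflectT e => eq_rect i V x j e
  | ReflectF _ => 0
  end.
Arguments gcast {K} V {i j} x.

Definition subspace (K : fieldType) (V : lmodType K) (P : {pred V}) : Prop :=
  0 \in P /\ forall (c : K) (u v : V), u \in P -> v \in P -> c *: u + v \in P.

Record galg (K : fieldType) := GAlg {
  gA :> int -> lmodType K;
  gmul : forall i j, gA i -> gA j -> gA (i + j);
  gone : gA 0;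
  gmulDl : forall i j (r : K) (a b : gA i) (c : gA j),
      gmul (r *: a + b) c = r *: gmul a c + gmul b c;
  gmulDr : forall i j (r : K) (a : gA i) (b c : gA j),
      gmul a (r *: b + c) = r *: gmul a b + gmul a c;
  gmulA : forall i j k (a : gA i) (b : gA j) (c : gA k),
      gmul (gmul a b) c = gcast gA (gmul a (gmul b c));
  gmul1l : forall j (a : gA j), gmul gone a = gcast gA a;
  gmul1r : forall j (a : gA j), gmul a gone = gcast gA a
}.
Arguments gmul {K A i j} : rename.
Arguments gone {K A} : rename.

(* A decreasing filtration (F_i A^* )_{i in Z} by graded subspaces:
   gF i k is the subspace (F_i A^* )^k of A^k. *)
Unset Implicit Arguments.
Record gfilt (K : fieldType) (A : galg K) := GFilt {
  gF :> int -> forall k : int, {pred A k};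
  gF_sub : forall i k : int, subspace (gF i k);
  gF_decr : forall (i k : int) (a : A k), a \in gF (i + 1) k -> a \in gF i k
}.

Set Implicit Arguments.
Arguments gfilt {K} A.
Arguments gF {K A} _ _ _ : rename.
Arguments gF_sub {K A}.
Arguments gF_decr {K A}.

Record gmod (K : fieldType) (A : galg K) := GMod {
  gM :> int -> lmodType K;
  gact : forall i j, A i -> gM j -> gM (i + j);
  gactDl : forall i j (r : K) (a b : A i) (x : gM j),
      gact (r *: a + b) x = r *: gact a x + gact b x;
  gactDr : forall i j (r : K) (a : A i) (x y : gM j),
      gact a (r *: x + y) = r *: gact a x + gact a y;
  gactA : forall i j k (a : A i) (b : A j) (x : gM k),
      gact (gmul a b) x = gcast gM (gact a (gact b x));
  gact1 : forall j (x : gM j), gact gone x = gcast gM x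
}.
Arguments gact {K A M i j} : rename.

Section Conditions.
Variables (K : fieldType) (p : nat) (A : galg K) (F : gfilt A).
Local Notation P := (p%:Z).

(* phi is a linear functional on the quotient space PP/QQ (QQ <= PP):       *)
Definition is_funcl (V : lmodType K) (PP QQ : {pred V}) (phi : V -> K) : Prop :=
  (forall (c : K) (u v : V), u \in PP -> v \in PP ->
      phi (c *: u + v) = c * phi u + phi v) /\
  (forall u, u \in QQ -> phi u = 0).

(* A finite list s = [(v_l, w_l)] with v_l in PP represents the tensor       *)
(* sum_l [v_l] (x) w_l of (PP/QQ) (x) W.  [tens_in PP QQ U s] says that     *)
(* this tensor (read in (PP/QQ) (x) (W/R) for a subspace R <= U) lies in     *)
(* (PP/QQ) (x) (U/R); with U = R it says that the tensor is zero.  It is    *)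
Definition tens_in (V W : lmodType K) (PP QQ : {pred V}) (U : {pred W})
    (s : seq (V * W)) : Prop :=
  forall phi : V -> K, is_funcl PP QQ phi ->
    \sum_(vw <- s) phi vw.1 *: vw.2 \in U.

Definition quot_dim1 (V : lmodType K) (PP QQ : {pred V}) : Prop :=
  exists2 g : V, g \in PP &
    g \notin QQ /\ forall a, a \in PP -> exists c : K, a - c *: g \in QQ.

Definition gn (i e : int) : int := 2 * i + e.
Definition gk (i e : int) : int := 2 * i * (P - 1) + e.
Definition gm (i j e : int) : int := 2 * i - j + e.
Definition gkappa (j e : int) : int := if odd `|j|%N then 1 - e else e.
Definition gdb (j e : int) : int := P * j - (P - 2) * (e - gkappa j e).
Definition gda (i j e : int) : int :=
  (gm i j e - gkappa j e) * (P - 1) + gkappa j e.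

Definition E1 : Prop := forall i k (a : A k), i <= 0 -> a \in F i k.
Definition E2 : Prop := forall k (a : A k), (forall i, a \in F i k) -> a = 0.
Definition E3 : Prop :=
  forall i j k (b : A j) (a : A k), a \in F i k -> gmul b a \in F i (j + k).
Definition E4 : Prop :=
  forall i j k (a : A k) (b : A j), a \in F i k -> gmul a b \in F (i - j) (k + j).
(* E_{2i+eps}^k A^* = 0, i.e. (F_{2i+eps} A)^k = (F_{2i+eps+1} A)^k *)
Definition E6 : Prop :=
  forall i k e : int, e \in [:: 0; 1] ->
    (k < gk i e \/ ((gn i e + k) %% (2 * P))%Z \notin [:: 0; 2]) ->
    forall a : A k, a \in F (gn i e) k -> a \in F (gn i e + 1) k.
Definition E7 : Prop :=
  forall i e : int, 0 <= i -> e \in [:: 0; 1] ->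
    quot_dim1 (F (gn i e) (gk i e)) (F (gn i e + 1) (gk i e)).
(* the map  E_{2i+eps}^{2i(p-1)+eps} (x) (A/F_{2i-j+eps+1})^j -> E_{2i-j+eps},
   [a] (x) [b] |-> [ab], is injective and surjective *)
Definition E8 : Prop :=
  forall i j e : int, 0 <= i -> 0 <= j -> e \in [:: 0; 1] ->
  (forall s : seq (A (gk i e) * A j),
     all (fun gc => gc.1 \in F (gn i e) (gk i e)) s ->
     \sum_(gc <- s) gmul gc.1 gc.2 \in F (gm i j e + 1) (gk i e + j) ->
     tens_in (F (gn i e) (gk i e)) (F (gn i e + 1) (gk i e))
             (F (gm i j e + 1) j) s)
  /\
  (forall c : A (gk i e + j), c \in F (gm i j e) (gk i e + j) ->
     exists2 s : seq (A (gk i e) * A j),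
       all (fun gc => gc.1 \in F (gn i e) (gk i e)) s &
       c - \sum_(gc <- s) gmul gc.1 gc.2 \in F (gm i j e + 1) (gk i e + j)).

(* t represents gamma_{i,j,eps}(b (x) [a]) in
   E_{2i+eps}^{2i(p-1)+eps} (x) (A/F_{2i-j+eps+1})^j, i.e.
   mu~(t) = [b a] in E_{2i-j+eps}. *)
Definition gamma_rep (i j e : int) (b : A (gdb j e)) (a : A (gda i j e))
    (t : seq (A (gk i e) * A j)) : bool :=
  all (fun hc => hc.1 \in F (gn i e) (gk i e)) t &&
  ((\sum_(hc <- t) gmul hc.1 hc.2) - gcast A (gmul b a)
     \in F (gm i j e + 1) (gk i e + j)).

(* ceiling of k/p *)
Definition ceilz (k : int) : int := - ((- k) %/ P)%Z.

Definition E9 : Prop :=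
  forall i j e : int, 0 <= i -> 0 <= j -> e \in [:: 0; 1] ->
  forall (k : int) (b : A (gdb j e)) (a : A (gda i j e))
         (t : seq (A (gk i e) * A j)),
    b \in F k (gdb j e) -> a \in F (gm i j e) (gda i j e) ->
    gamma_rep b a t ->
    (* image of (F_{ceil(k/p)} A)^j in (A/F_{2i-j+eps+1})^j *)
    tens_in (F (gn i e) (gk i e)) (F (gn i e + 1) (gk i e))
            (F (Order.min (ceilz k) (gm i j e + 1)) j) t.

Variable M : gmod A.

Definition unstable : Prop :=
  forall n k (a : A k) (x : M n), a \in F (n + 1) k -> gact a x = 0.

(* An element of
   (Phi M^* )^{2ip+2eps} = E_{2i+eps}^{2i(p-1)+eps} (x) M^{2i+eps} is a list
   s = [(a_l, x_l)] (a_l in F_{2i+eps}), and lambda_M maps it to sum a_l x_l. *)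
Definition im_lambda (d : int) (y : M d) : Prop :=
  y = 0 \/
  exists i e : int, [/\ e \in [:: 0; 1], d = 2 * i * P + 2 * e &
    exists2 s : seq (A (gk i e) * M (gn i e)),
      all (fun ax => ax.1 \in F (gn i e) (gk i e)) s &
      y = gcast M (\sum_(ax <- s) gact ax.1 ax.2)].

(* Sigma^{-1} Coker lambda_M is unstable:
   (F_{n+1} A)^k . (Coker lambda_M)^{n+1} = 0 for all n. *)
Definition desusp_coker_unstable : Prop :=
  forall n k (a : A k) (x : M (n + 1)), a \in F (n + 1) k -> im_lambda (gact a x).

(* Each non-trivial component of the
   action of A^* on Phi M^* is of the form
     A^{pj-(p-2)(eps-kappa)} (x) E_{2i-j+eps}^{(2i-j+eps-kappa)(p-1)+kappa} (x) M^{2i-j+eps}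
        -> E_{2i+eps}^{2i(p-1)+eps} (x) M^{2i+eps},
     (1 (x) alphabar_{M,2i-j+eps}) o (gamma_{i,j,eps} (x) 1)
   (j = 2j' : the component on A^{2j'p}; j = 2j'+1, eps = 1 : on A^{2j'p+2};
   j = 2j'-1, eps = 0 : on A^{2j'p-2}); all other components vanish.
   The source lives in (Phi M^* )^{p(2i-j+eps-kappa)+2 kappa}.
   For y = sum_l [g_l] (x) x_l in Ker lambda_M of that degree and
   a in F_{deg y} A^*, we require a.y = 0, where a.y is computed from
   arbitrary representatives t_l of gamma(a (x) [g_l]). *)
Definition desusp_ker_unstable : Prop :=
  forall i j e : int, 0 <= i -> 0 <= j -> e \in [:: 0; 1] ->
  forall s : seq (A (gda i j e) * M (gm i j e)),
    all (fun gx => gx.1 \in F (gm i j e) (gda i j e)) s ->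
    \sum_(gx <- s) gact gx.1 gx.2 = 0 ->
  forall a : A (gdb j e),
    a \in F (P * (gm i j e - gkappa j e) + 2 * gkappa j e) (gdb j e) ->
  forall ts : seq (seq (A (gk i e) * A j)),
    all2 (fun gx t => gamma_rep a gx.1 t) s ts ->
    tens_in (F (gn i e) (gk i e)) (F (gn i e + 1) (gk i e)) (pred1 0)
      (flatten [seq [seq (hc.1, gact hc.2 st.1.2) | hc <- st.2]
               | st <- zip s ts]).

End Conditions.

From HB Require Import structures.
From mathcomp Require Import all_boot all_order all_algebra.
From mathcomp Require Import zify ring.
Import Order.TTheory GRing.Theory Num.Theory.
Local Open Scope ring_scope.

(* Both parts rest on (E6) and (E8): if u lies in F_L A^k but not in F_{L+1} A^k
   (L >= 0), then (L, k) = (2i-j+e, 2i(p-1)+e+j) and, modulo F_{L+1}, u is a sum of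
   products g c with [g] in the line E_{2i+e}^{2i(p-1)+e}.
   (1) For a in F_m A^k and x in M^m this writes a x, up to the action of F_{m+1},
   which vanishes by instability, as sum g (c x), an element of the image of lambda.
   (2) Since E_m^{(m-kappa)(p-1)+kappa} is a line spanned by some [G2], an element of
   Ker lambda of that degree is [G2] (x) x with G2 x = 0, and a acts on it through
   any b with G b = a G2 modulo F_{m+1}, where [G] spans E_{2i+e}^{2i(p-1)+e}.  That
   every such b kills x is proved by descending induction on the filtration degree
   of a.  For a product a = g c, decomposing c G2 and then g H reduces b to
   gamma(g (x) [H]) c' with H (c' x) = 0; (E9) puts the A-component of
   gamma(g (x) [H]) in a filtration degree where, by (E6), it either kills c' x by
   instability or is a multiple of H modulo the next filtration step. *)

Set Implicit Arguments. Unset Strict Implicit.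

Section GradedCast.
Variables (K : fieldType) (V : int -> lmodType K).

Lemma gcastE i (x : V i) : gcast V x = x.
Proof. by rewrite /gcast; case: eqP => // e; rewrite (eq_irrelevance e erefl). Qed.

Lemma gcast_is_linear i j : linear (@gcast K V i j).
Proof.
move=> c x y; rewrite /gcast; case: eqP => [e|_]; last by rewrite scaler0 addr0.
by case: j / e.
Qed.

HB.instance Definition _ i j :=
  GRing.isLinear.Build K (V i) (V j) _ (@gcast K V i j) (@gcast_is_linear i j).

Lemma gcastK i j k (x : V i) : i = j -> gcast V (gcast V x : V j) = gcast V x :> V k.
Proof. by move=> e; case: j / e; rewrite gcastE. Qed.

Lemma gcast_eq0 i j (x : V i) : i = j -> gcast V x = 0 :> V j -> x = 0.
Proof. by move=> e; case: j / e; rewrite gcastE. Qed.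

End GradedCast.
Arguments gcastK {K V i j k} x.

Section GradedAlgebra.
Variables (K : fieldType) (A : galg K).

HB.instance Definition _ i j (a : A i) :=
  GRing.isLinear.Build K (A j) (A (i + j)) _ (gmul a) (fun r => gmulDr r a).

Definition gmulr i j (c : A j) (a : A i) := gmul a c.

HB.instance Definition _ i j (c : A j) :=
  GRing.isLinear.Build K (A i) (A (i + j)) _ (gmulr c) (fun r a b => gmulDl r a b c).

Lemma gmul0l i j (c : A j) : gmul (0 : A i) c = 0.
Proof. exact: raddf0 (gmulr c). Qed.

Lemma gmul_addl i j (a b : A i) (c : A j) : gmul (a + b) c = gmul a c + gmul b c.
Proof. exact: (raddfD (gmulr c) a b). Qed.

Lemma gmulBl i j (a b : A i) (c : A j) : gmul (a - b) c = gmul a c - gmul b c.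
Proof. exact: (raddfB (gmulr c) a b). Qed.

Lemma gmulZl i j r (a : A i) (c : A j) : gmul (r *: a) c = r *: gmul a c.
Proof. exact: (linearZZ (gmulr c) r a). Qed.

Lemma gmul_castl i i' j (a : A i) (b : A j) :
  i = i' -> gmul (gcast A a : A i') b = gcast A (gmul a b).
Proof. by move=> e; case: i' / e; rewrite !gcastE. Qed.

Lemma gmul_castr i j j' (a : A i) (b : A j) :
  j = j' -> gmul a (gcast A b : A j') = gcast A (gmul a b).
Proof. by move=> e; case: j' / e; rewrite !gcastE. Qed.

Variable M : gmod A.

HB.instance Definition _ i j (a : A i) :=
  GRing.isLinear.Build K (M j) (M (i + j)) _ (gact a) (fun r => gactDr r a).

Definition gactr i j (x : M j) (a : A i) := gact a x.

HB.instance Definition _ i j (x : M j) :=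
  GRing.isLinear.Build K (A i) (M (i + j)) _ (gactr x) (fun r a b => gactDl r a b x).

Lemma gact_addl i j (a b : A i) (x : M j) : gact (a + b) x = gact a x + gact b x.
Proof. exact: (raddfD (gactr x) a b). Qed.

Lemma gactBl i j (a b : A i) (x : M j) : gact (a - b) x = gact a x - gact b x.
Proof. exact: (raddfB (gactr x) a b). Qed.

Lemma gactZl i j r (a : A i) (x : M j) : gact (r *: a) x = r *: gact a x.
Proof. exact: (linearZZ (gactr x) r a). Qed.

Lemma gact_suml i j T (s : seq T) (f : T -> A i) (x : M j) :
  gact (\sum_(t <- s) f t) x = \sum_(t <- s) gact (f t) x.
Proof. exact: (raddf_sum (gactr x)). Qed.

Lemma gact_castl i i' j (a : A i) (x : M j) :
  i = i' -> gact (gcast A a : A i') x = gcast M (gact a x).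
Proof. by move=> e; case: i' / e; rewrite !gcastE. Qed.

Lemma gact_castr l i j (a : A l) (x : M i) :
  i = j -> gact a (gcast M x : M j) = gcast M (gact a x).
Proof. by move=> e; case: j / e; rewrite !gcastE. Qed.

End GradedAlgebra.

Section Filtration.
Variables (K : fieldType) (A : galg K) (F : gfilt A).

HB.instance Definition _ i k :=
  GRing.isSubmodClosed.Build K (A k) (F i k) (GRing.submod_closed_semi (gF_sub F i k)).

Lemma gF_le L L' k (u : A k) : L <= L' -> u \in F L' k -> u \in F L k.
Proof.
move=> le_LL'; have [d ->] : exists d : nat, L' = L + d%:Z by exists `|L' - L|%N; lia.
elim: d => [|d IH]; first by rewrite addr0.
by rewrite -addn1 PoszD addrA => /(gF_decr F)/IH.
Qed.

Lemma gF_cast L L' k k' (u : A k) :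
  k = k' -> L = L' -> u \in F L k -> (gcast A u : A k') \in F L' k'.
Proof. by move=> ek eL; case: k' / ek; case: L' / eL; rewrite gcastE. Qed.

End Filtration.


Lemma mem01 (e : int) : e \in [:: 0; 1] -> e = 0 \/ e = 1.
Proof. by rewrite !inE => /orP[] /eqP; [left | right]. Qed.

Lemma mod2_01 (m : int) : (m %% 2)%Z \in [:: 0; 1].
Proof. by have := ltz_pmod m (_ : 0 < 2); have := modz_ge0 m (_ : 2 != 0); rewrite !inE; lia. Qed.

Lemma gn_div2 (m : int) : gn (m %/ 2)%Z (m %% 2)%Z = m.
Proof. by rewrite /gn {3}(divz_eq m 2); lia. Qed.

Section Degrees.
Variable p : nat.
Local Notation P := p%:Z.

Lemma gkappa_parity i j e i' e' : 0 <= j -> e \in [:: 0; 1] -> e' \in [:: 0; 1] ->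
  gn i' e' = gm i j e -> gkappa j e = e'.
Proof.
case: j => [n|//] _ /mem01 e01 /mem01 e'01; rewrite /gkappa /gn /gm /=.
have := odd_double_half n; rewrite -muln2; case: (odd n) => /= n_eq; lia.
Qed.

Lemma gdb_add_gda i j e : gdb p j e + gda p i j e = gk p i e + j.
Proof. by rewrite /gdb /gda /gk /gm; ring. Qed.

Lemma gda_gk i j e i' e' : 0 <= j -> e \in [:: 0; 1] -> e' \in [:: 0; 1] ->
  gn i' e' = gm i j e -> gda p i j e = gk p i' e'.
Proof.
move=> j_ge0 e01 e'01 eq_n; rewrite /gda (gkappa_parity j_ge0 e01 e'01 eq_n) -eq_n.
by rewrite /gn /gk; ring.
Qed.

Hypothesis p_ge2 : 2 <= P.

Lemma le_ceilz n L : (n <= ceilz p L) = (P * (n - 1) < L).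
Proof.
rewrite /ceilz; have := divz_eq (- L) P.
have := modz_ge0 (- L) (_ : P != 0); have := ltz_pmod (- L) (_ : 0 < P).
set q := ((- L) %/ P)%Z; set r := ((- L) %% P)%Z.
move=> r_lt r_ge0 eqL; apply/idP/idP => ?; nia.
Qed.

Lemma gk_add_gn_inj i e i' e' : e \in [:: 0; 1] -> e' \in [:: 0; 1] ->
  gk p i' e' + gn i' e' = gk p i e + gn i e -> i' = i /\ e' = e.
Proof.
rewrite /gk /gn => /mem01 e01 /mem01 e'01 eq_deg.
have eq_i : i' = i by case: e01 e'01 => ? [] ?; subst; nia.
by split=> //; move: eq_deg; rewrite eq_i; lia.
Qed.

Lemma critical_degree I eI i e i' e' j : eI \in [:: 0; 1] -> e' \in [:: 0; 1] ->
  e \in [:: 0; 1] -> ((gn i e) %% (2 * P))%Z \in [:: 0; 2] ->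
  gn i' e' = gm i j e -> gk p I eI + gk p i' e' = gk p i e + j ->
  gn I eI <= P * gn i' e' -> gk p i' e' <= j -> j = gk p i' e'.
Proof.
rewrite /gn /gm /gk => /mem01 eI01 /mem01 e'01 /mem01 e01 mod_ie eq_n eq_k le_n le_k.
have e0 : e = 0.
  move: mod_ie; have := divz_eq (2 * i + e) (2 * P).
  set q := ((2 * i + e) %/ (2 * P))%Z; rewrite !inE => eq_ie /orP[] /eqP r; lia.
subst e; set u := i - i'.
have eqI : 2 * I * (P - 1) + eI = 2 * P * u - 2 * e' by rewrite /u; nia.
have eI0 : eI = 0.
  have : eI = 2 * (P * u - e' - I * (P - 1)) by nia.
  lia.
subst eI; set q := I - u.
have eq_q : I = P * q + e' by rewrite /q; nia.
have le_q : q <= i' by rewrite eq_q in le_n; case: e'01 => ?; subst e'; nia.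
have eq_u : u = q * (P - 1) + e' by rewrite /q; nia.
have : u <= i' * (P - 1) + e' by rewrite eq_u; nia.
rewrite /u; lia.
Qed.

(* By (E6), these are the only bidegrees (L, k) with possibly E_L^k A <> 0 for L >= 0;
   they are those of the products in (E8). *)
Variant E8_bidegree (L k : int) : Prop :=
  E8Bidegree i e j of 0 <= i & 0 <= j & e \in [:: 0; 1] &
    L = gm i j e & k = gk p i e + j.

Lemma E8_bidegree_of L k : 0 <= L -> gk p (L %/ 2)%Z (L %% 2)%Z <= k ->
  ((L + k) %% (2 * P))%Z \in [:: 0; 2] -> E8_bidegree L k.
Proof.
rewrite /gk => L_ge0 le_k; have := divz_eq L 2; have := divz_eq (L + k) (2 * P).
set i' := (L %/ 2)%Z; set e' := (L %% 2)%Z; set q := ((L + k) %/ (2 * P))%Z.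
have /andP[e'_ge0 e'_lt2] : 0 <= e' < 2 by rewrite modz_ge0 // ltz_pmod.
rewrite !inE => eq_Lk eq_L /orP[] /eqP r; rewrite r in eq_Lk.
- have le_i' : i' <= q by nia.
  have : 2 * i' + e' <= 2 * q.
    case: (ltP i' q) => [|?]; first by lia.
    have eq_q : q = i' by lia.
    by rewrite eq_q in eq_Lk; nia.
  by move=> ?; exists q 0 (2 * q - L); rewrite ?inE /gm /gk; lia.
have le_i' : i' <= q by nia.
by exists q 1 (2 * q + 1 - L); rewrite ?inE /gm /gk; lia.
Qed.

End Degrees.

Section Congruence.
Variables (K : fieldType) (A : galg K) (F : gfilt A).

Definition congF L k (u v : A k) := u - v \in F L k.

Lemma congF_refl L k (u : A k) : congF L u u.
Proof. by rewrite /congF subrr rpred0. Qed.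

Lemma congF_sym L k (u v : A k) : congF L u v -> congF L v u.
Proof. by rewrite /congF -opprB rpredN. Qed.

Lemma congF_trans L k (u v w : A k) : congF L u v -> congF L v w -> congF L u w.
Proof. by rewrite /congF => uv vw; rewrite -[u](subrK v) -addrA rpredD. Qed.

Lemma congFD L k (u1 u2 v1 v2 : A k) :
  congF L u1 v1 -> congF L u2 v2 -> congF L (u1 + u2) (v1 + v2).
Proof. by rewrite /congF opprD addrACA; apply: rpredD. Qed.

Lemma congFZ L k c (u v : A k) : congF L u v -> congF L (c *: u) (c *: v).
Proof. by rewrite /congF -scalerBr; apply: rpredZ. Qed.

Lemma congF_mem L k (u v : A k) : congF L u v -> (u \in F L k) = (v \in F L k).
Proof. by rewrite /congF => uv; rewrite -[u](subrK v) rpredDl. Qed.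

Lemma congF_cast L L' k k' (u v : A k) : k = k' -> L = L' -> congF L u v ->
  congF L' (gcast A u : A k') (gcast A v).
Proof. by move=> ek eL; case: k' / ek; case: L' / eL; rewrite !gcastE. Qed.

Lemma congF_mull (h3 : E3 F) L k l (b : A l) (u v : A k) :
  congF L u v -> congF L (gmul b u) (gmul b v).
Proof. by rewrite /congF -raddfB; apply: h3. Qed.

Lemma congF_mulr (h4 : E4 F) L k l (c : A l) (u v : A k) :
  congF L u v -> congF (L - l) (gmul u c) (gmul v c).
Proof. by rewrite /congF -gmulBl; apply: h4. Qed.

End Congruence.

Section Unstable.
Variables (K : fieldType) (A : galg K) (F : gfilt A).
Variables (M : gmod A) (hu : unstable F M).
Local Notation congF := (congF F).

Lemma congF_act n k (x : M n) (u v : A k) : congF (n + 1) u v -> gact u x = gact v x.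
Proof. by move=> /(hu x) /eqP; rewrite gactBl subr_eq0 => /eqP. Qed.

Lemma unstable_neg (h1 : E1 F) n (x : M n) : n < 0 -> x = 0.
Proof.
move=> n_lt0; have : gact (gone : A 0) x = 0 by apply: hu; apply: h1; lia.
by rewrite gact1; apply: gcast_eq0; rewrite add0r.
Qed.

End Unstable.

Section Filtered.
Variables (K : fieldType) (p : nat) (A : galg K) (F : gfilt A).
Hypothesis p_ge2 : 2 <= p%:Z.
Local Notation congF := (congF F).

Lemma gF_succ_or_E8 (h6 : E6 p F) L k (u : A k) : 0 <= L -> u \in F L k ->
  u \in F (L + 1) k \/ E8_bidegree p L k.
Proof.
move=> L_ge0 uL; have eqL := gn_div2 L.
have [Lk_low | Lk_E8] := boolP ((k < gk p (L %/ 2)%Z (L %% 2)%Z) ||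
   (((gn (L %/ 2)%Z (L %% 2)%Z + k) %% (2 * p%:Z))%Z \notin [:: 0; 2])).
  left; rewrite -eqL; apply: h6 (mod2_01 L) _ _ _; last by rewrite eqL.
  by case/orP: Lk_low; [left | right].
right; move: Lk_E8; rewrite negb_or negbK -leNgt eqL => /andP[].
exact: E8_bidegree_of.
Qed.

Lemma gF_eq0 (h2 : E2 F) (h6 : E6 p F) L k (u : A k) :
  0 <= L -> k < L -> u \in F L k -> u = 0.
Proof.
move=> L_ge0 lt_kL uL; apply: h2 => L'; have [le_L'L | lt_LL'] := leP L' L.
  exact: gF_le uL.
suff uLd : forall d : nat, u \in F (L + d%:Z) k.
  by apply: (gF_le _ (uLd `|L' - L|%N)); lia.
elim=> [|d IH]; first by rewrite addr0.
have Ld_ge0 : 0 <= L + d%:Z by lia.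
case: (gF_succ_or_E8 h6 Ld_ge0 IH) => [|[i e j i_ge0 j_ge0 /mem01 e01 eqL eqk]].
  by rewrite -addrA -PoszD addn1.
by move: eqL eqk; rewrite /gm /gk; nia.
Qed.

Variables (M : gmod A) (hu : unstable F M).

Lemma im_lambda_act (h1 : E1 F) (h6 : E6 p F) (h8 : E8 p F) m k (a : A k) (x : M m) :
  a \in F m k -> im_lambda p F (gact a x).
Proof.
move=> am; have [m_lt0 | m_ge0] := ltP m 0.
  by left; rewrite (unstable_neg hu h1 x m_lt0) raddf0.
have [am1 | [i e j i_ge0 j_ge0 e01 eqm eqk]] := gF_succ_or_E8 h6 m_ge0 am.
  by left; apply: hu.
subst m k; have [s sF a_eq] := (h8 i j e i_ge0 j_ge0 e01).2 a am.
have eqn : j + gm i j e = gn i e by rewrite /gn /gm; lia.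
right; exists i, e; split => //; first by rewrite /gk /gm; ring.
exists [seq (gc.1, gcast M (gact gc.2 x) : M (gn i e)) | gc <- s]; first by rewrite all_map.
rewrite (congF_act hu x a_eq) gact_suml big_map raddf_sum; apply: eq_bigr => gc _ /=.
by rewrite gactA gact_castr // [RHS]gcastK // eqn.
Qed.

End Filtered.

Section CoordinateBasis.
Variables (K : fieldType) (A : galg K) (F : gfilt A).
Local Notation congF := (congF F).

(* [G] is a basis of E_L^k = F_L A^k / F_{L+1} A^k and mu the coordinate along it. *)
Definition quot_basis L k (G : A k) (mu : A k -> K) :=
  [/\ G \in F L k, is_funcl (F L k) (F (L + 1) k) mu,
      {in F L k, forall a, congF (L + 1) a (mu a *: G)} & mu G = 1].

Lemma quot_basis_of_dim1 L k : quot_dim1 (F L k) (F (L + 1) k) ->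
  exists G mu, @quot_basis L k G mu.
Proof.
move=> [G GL [GNL1 GP]].
have coordP a : exists c : K, (a \in F L k) ==> congF (L + 1) a (c *: G).
  by case: (boolP (a \in F L k)) => [/GP[c]|]; [exists c | exists 0].
pose mu a := xchoose (coordP a).
have mu_cong : {in F L k, forall a, congF (L + 1) a (mu a *: G)}.
  by move=> a aL; move/implyP: (xchooseP (coordP a)); apply.
have mu_uniq a c : a \in F L k -> congF (L + 1) a (c *: G) -> mu a = c.
  move=> aL ac; apply/eqP; rewrite -subr_eq0; apply/negP => /negP mu_c.
  have := congF_trans (congF_sym (mu_cong a aL)) ac.
  rewrite /congF -scalerBl => /(rpredZ (mu a - c)^-1); rewrite scalerA mulVf //.
  by rewrite scale1r; apply/negP.
exists G, mu; split=> //; last by apply: mu_uniq; rewrite ?scale1r ?congF_refl.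
split=> [c u v uL vL | u uL1]; apply: mu_uniq.
- by rewrite rpredD ?rpredZ.
- by rewrite scalerDl -scalerA congFD ?congFZ ?mu_cong.
- exact: gF_decr.
- by rewrite /congF scale0r subr0.
Qed.

Lemma quot_basis_funcl L k G mu phi : @quot_basis L k G mu ->
  is_funcl (F L k) (F (L + 1) k) phi -> {in F L k, forall h, phi h = mu h * phi G}.
Proof.
move=> [GL _ mu_cong _] [phi_lin phi0] h hL.
have := phi_lin (- mu h) G h GL hL.
rewrite addrC phi0; last by rewrite scaleNr; exact: mu_cong.
by move/eqP; rewrite eq_sym mulNr addrC subr_eq0 => /eqP.
Qed.

End CoordinateBasis.
Arguments quot_basis {K A} F L k G mu.

Section BasisProducts.
Variables (K : fieldType) (p : nat) (A : galg K) (F : gfilt A).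
Hypotheses (h4 : E4 F) (h8 : E8 p F).
Variables (i e : int) (i_ge0 : 0 <= i) (e01 : e \in [:: 0; 1]).
Variables (G : A (gk p i e)) (mu : A (gk p i e) -> K).
Hypothesis G_basis : quot_basis F (gn i e) (gk p i e) G mu.
Local Notation congF := (congF F).

Lemma basis_mul_inj j (w : A j) : 0 <= j ->
  gmul G w \in F (gm i j e + 1) (gk p i e + j) -> w \in F (gm i j e + 1) j.
Proof.
case: G_basis => GL mu_funcl _ muG j_ge0 Gw.
have := (h8 i_ge0 j_ge0 e01).1 [:: (G, w)].
rewrite /= GL big_seq1 => /(_ isT Gw mu mu_funcl).
by rewrite big_seq1 /= muG scale1r.
Qed.

Lemma basis_contract j (s : seq (A (gk p i e) * A j)) :
  all (fun gc => gc.1 \in F (gn i e) (gk p i e)) s ->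
  congF (gm i j e + 1) (gmul G (\sum_(gc <- s) mu gc.1 *: gc.2))
                       (\sum_(gc <- s) gmul gc.1 gc.2).
Proof.
case: G_basis => _ _ mu_cong _ /allP sF.
rewrite /congF raddf_sum /= -sumrB big_seq rpred_sum // => gc /sF gcF.
have -> : gm i j e + 1 = gn i e + 1 - j by rewrite /gm /gn; lia.
rewrite linearZ /= -gmulZl -gmulBl; apply: h4.
by rewrite -opprB rpredN; apply: mu_cong.
Qed.

Lemma basis_lift j (c : A (gk p i e + j)) : 0 <= j ->
  c \in F (gm i j e) (gk p i e + j) ->
  exists b : A j, congF (gm i j e + 1) (gmul G b) c.
Proof.
move=> j_ge0 cF; have [s sF c_eq] := (h8 i_ge0 j_ge0 e01).2 c cF.
exists (\sum_(gc <- s) mu gc.1 *: gc.2).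
exact: congF_trans (basis_contract sF) (congF_sym c_eq).
Qed.

Variables (M : gmod A) (hu : unstable F M).

Lemma basis_act_cong j (z : M (gm i j e)) (b b' : A j) : 0 <= j ->
  congF (gm i j e + 1) (gmul G b) (gmul G b') -> gact b z = gact b' z.
Proof.
move=> j_ge0 bb'; apply: (congF_act hu).
by apply: basis_mul_inj; rewrite // raddfB.
Qed.

End BasisProducts.

Section KernelDesuspension.
Variables (K : fieldType) (p : nat) (A : galg K) (F : gfilt A) (M : gmod A).
Hypotheses (p_ge2 : 2 <= p%:Z) (h1 : E1 F) (h2 : E2 F) (h3 : E3 F) (h4 : E4 F) (h6 : E6 p F)
  (h7 : E7 p F) (h8 : E8 p F) (h9 : E9 p F) (hu : unstable F M).
Local Notation P := p%:Z.
Local Notation congF := (congF F).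

Section FixedBasis.
Variables (i e : int) (i_ge0 : 0 <= i) (e01 : e \in [:: 0; 1]).
Variables (G : A (gk p i e)) (mu : A (gk p i e) -> K).
Hypothesis G_basis : quot_basis F (gn i e) (gk p i e) G mu.

Lemma gamma_coord_level k j (b : A (gdb p j e)) (a : A (gda p i j e))
    (t : seq (A (gk p i e) * A j)) :
  0 <= j -> b \in F k (gdb p j e) -> a \in F (gm i j e) (gda p i j e) ->
  gamma_rep F b a t ->
  \sum_(gc <- t) mu gc.1 *: gc.2 \in F (Order.min (ceilz p k) (gm i j e + 1)) j.
Proof.
move=> j_ge0 bF aF t_rep; case: G_basis => _ mu_funcl _ _.
exact: h9 i_ge0 j_ge0 e01 k b a t bF aF t_rep mu mu_funcl.
Qed.

Lemma gamma_coord_kills I eI i' e' j (g : A (gk p I eI)) (H : A (gk p i' e'))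
    (muH : A (gk p i' e') -> K) (z : M (gn i' e')) (q : seq (A (gk p i e) * A j))
    (eq_n : gn i' e' = gm i j e) (eq_k : gk p I eI + gk p i' e' = gk p i e + j) :
  0 <= j -> eI \in [:: 0; 1] -> e' \in [:: 0; 1] ->
  quot_basis F (gn i' e') (gk p i' e') H muH -> gact H z = 0 ->
  g \in F (gn I eI) (gk p I eI) -> gk p i' e' + gn i' e' <= gn I eI ->
  gamma_rep F (gcast A g : A (gdb p j e)) (gcast A H : A (gda p i j e)) q ->
  gact (\sum_(gc <- q) mu gc.1 *: gc.2) z = 0.
Proof.
move=> j_ge0 eI01 e'01 H_basis Hz gF le_nI q_rep.
set Eb := \sum_(gc <- q) mu gc.1 *: gc.2.
have eq_da : gda p i j e = gk p i' e' := gda_gk p j_ge0 e01 e'01 eq_n.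
have eq_db : gk p I eI = gdb p j e.
  by have := gdb_add_gda p i j e; rewrite eq_da -eq_k => /addIr.
have Eb_min : Eb \in F (Order.min (ceilz p (gn I eI)) (gm i j e + 1)) j.
  apply: gamma_coord_level j_ge0 (gF_cast eq_db (erefl _) gF) _ q_rep.
  by case: H_basis => HF _ _ _; exact: gF_cast HF.
have kill (y : A j) : y \in F (gn i' e' + 1) j -> gact y z = 0 by apply: hu.
have n_le_ceil : gn i' e' <= ceilz p (gn I eI).
  rewrite (le_ceilz p_ge2); move: le_nI e'01; rewrite /gk /gn => ? /mem01; nia.
have [n1_le_ceil | ceil_lt_n1] := leP (gn i' e' + 1) (ceilz p (gn I eI)).
  by apply: kill; apply: gF_le Eb_min; rewrite le_min n1_le_ceil eq_n lexx.
have EbF : Eb \in F (gn i' e') j.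
  by apply: gF_le Eb_min; rewrite le_min n_le_ceil eq_n lerDl.
have [low | crit] := boolP ((j < gk p i' e') ||
    (((gn i' e' + j) %% (2 * P))%Z \notin [:: 0; 2])).
  by apply: kill; apply: h6 EbF => //; case/orP: low; [left | right].
move: crit; rewrite negb_or negbK -leNgt => /andP[le_j mod_n].
(* the critical case: Eb has the degree of H, so it is a multiple of H modulo F_{n+1} *)
have eq_j : j = gk p i' e'.
  have mod_ie : ((gn i e) %% (2 * P))%Z \in [:: 0; 2].
    by move: mod_n; rewrite eq_n /gm /gn; have -> : 2 * i - j + e + j = 2 * i + e by lia.
  have le_nIp : gn I eI <= P * gn i' e'.
    by move: ceil_lt_n1; rewrite ltNge (le_ceilz p_ge2) -leNgt; nia.
  exact: (critical_degree p_ge2 eI01 e'01 e01 mod_ie eq_n eq_k le_nIp le_j).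
case: H_basis => _ _ muH_cong _.
have := congF_act hu z (muH_cong _ (gF_cast eq_j (erefl _) EbF)).
rewrite gactZl Hz scaler0 (gact_castl _ _ eq_j).
by apply: gcast_eq0; rewrite eq_j.
Qed.

Lemma gamma_lift I eI i' e' j (g : A (gk p I eI)) (H : A (gk p i' e'))
    (eq_n : gn i' e' = gm i j e) (eq_k : gk p I eI + gk p i' e' = gk p i e + j) :
  0 <= j -> e' \in [:: 0; 1] -> gmul g H \in F (gn i' e') (gk p I eI + gk p i' e') ->
  exists2 q, gamma_rep F (gcast A g : A (gdb p j e)) (gcast A H : A (gda p i j e)) q &
    congF (gm i j e + 1) (gmul G (\sum_(gc <- q) mu gc.1 *: gc.2))
                         (gcast A (gmul g H) : A (gk p i e + j)).
Proof.
move=> j_ge0 e'01 gHF.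
have [q qF v_q] := (h8 i_ge0 j_ge0 e01).2 _ (gF_cast eq_k eq_n gHF).
exists q; last exact: congF_trans (basis_contract h4 i_ge0 e01 G_basis qF) (congF_sym v_q).
have eq_da : gk p i' e' = gda p i j e by rewrite (gda_gk p j_ge0 e01 e'01 eq_n).
have eq_db : gk p I eI = gdb p j e.
  by have := gdb_add_gda p i j e; rewrite -eq_da -eq_k => /addIr.
apply/andP; split=> //.
rewrite (gmul_castl _ _ eq_db) (gmul_castr _ _ eq_da) gcastK ?eq_db // gcastK.
  exact: congF_sym v_q.
by rewrite eq_db eq_da.
Qed.

Variables (j : int) (j_ge0 : 0 <= j).

Lemma gamma_rep_contract (phi : A (gk p i e) -> K) (a : A (gdb p j e))
    (g G2 : A (gda p i j e)) (c : K) (b : A j) (t : seq (A (gk p i e) * A j))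
    (y : M (gm i j e)) :
  is_funcl (F (gn i e) (gk p i e)) (F (gn i e + 1) (gk p i e)) phi ->
  congF (gm i j e + 1) g (c *: G2) ->
  congF (gm i j e + 1) (gmul G b) (gcast A (gmul a G2)) ->
  gamma_rep F a g t ->
  \sum_(hc <- t) phi hc.1 *: gact hc.2 y = phi G *: gact b (c *: y).
Proof.
move=> phi_funcl g_cG2 b_aG2 /andP[tF t_ag].
have -> : \sum_(hc <- t) phi hc.1 *: gact hc.2 y =
          phi G *: gact (\sum_(hc <- t) mu hc.1 *: hc.2) y.
  rewrite gact_suml scaler_sumr; apply: eq_big_seq => hc /(allP tF) hcF.
  by rewrite (quot_basis_funcl G_basis phi_funcl hcF) gactZl scalerA mulrC.
congr (_ *: _); rewrite linearZ /= -gactZl.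
apply: (basis_act_cong h8 i_ge0 e01 G_basis hu y j_ge0).
apply: congF_trans (basis_contract h4 i_ge0 e01 G_basis tF) _.
apply: congF_trans t_ag _.
have := congF_cast (gdb_add_gda p i j e) (erefl _) (congF_mull h3 a g_cG2).
move=> /congF_trans; apply.
rewrite linearZ /= linearZ /= linearZ /=; apply: congFZ; exact: congF_sym b_aG2.
Qed.

Variable x : M (gm i j e).

Lemma basis_mul_kills (b : A j) (w : A (gk p i e + j)) :
  congF (gm i j e + 1) (gmul G b) w -> w \in F (gm i j e + 1) (gk p i e + j) ->
  gact b x = 0.
Proof.
move=> bw wF; apply: hu; apply: (basis_mul_inj h8 i_ge0 e01 G_basis j_ge0).
by rewrite (congF_mem bw).
Qed.

Lemma basis_prod_kills I eI i' e' j' (g : A (gk p I eI)) (H : A (gk p i' e'))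
    (muH : A (gk p i' e') -> K) (D : A j') (b : A j)
    (eq_m : gm i j e = gm i' j' e')
    (eq_k : gk p I eI + gk p i' e' + j' = gk p i e + j) :
  0 <= i' -> e' \in [:: 0; 1] -> eI \in [:: 0; 1] -> 0 <= j' ->
  quot_basis F (gn i' e') (gk p i' e') H muH ->
  g \in F (gn I eI) (gk p I eI) -> gk p i' e' + gn i' e' <= gn I eI ->
  gact H (gact D x) = 0 ->
  congF (gm i j e + 1) (gmul G b) (gcast A (gmul (gmul g H) D)) -> gact b x = 0.
Proof.
move=> i'_ge0 e'01 eI01 j'_ge0 H_basis gF le_nI HDx bgHD.
have eq_m1 : gn i' e' + 1 - j' = gm i j e + 1 by rewrite eq_m /gn /gm; lia.
have gHF : gmul g H \in F (gn i' e') (gk p I eI + gk p i' e').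
  by case: H_basis => HF _ _ _; apply: h3.
have n'_ge0 : 0 <= gn i' e' by move: e'01 => /mem01; rewrite /gn; lia.
have [gHF1 | [i3 e3 j3 _ j3_ge0 e301 eq_n3 eq_k3]] := gF_succ_or_E8 p_ge2 h6 n'_ge0 gHF.
  apply: basis_mul_kills bgHD _.
  by apply: gF_cast eq_k eq_m1 _; apply: h4.
have [? ?] : i3 = i /\ e3 = e.
  apply: (gk_add_gn_inj p_ge2 e01 e301).
  by move: eq_n3 eq_k3 eq_k eq_m; rewrite /gn /gm; lia.
subst i3 e3.
have eq_j : j3 + j' = j by move: eq_n3 eq_m; rewrite /gn /gm; lia.
have [q q_rep G_Eb] := gamma_lift eq_n3 eq_k3 j3_ge0 e'01 gHF.
set Eb := \sum_(gc <- q) mu gc.1 *: gc.2 in G_Eb.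
have EbDx : gact Eb (gact D x) = 0.
  have eq_z : j' + gm i j e = gn i' e' by rewrite eq_m /gn /gm; lia.
  have Hz : gact H (gcast M (gact D x) : M (gn i' e')) = 0.
    by rewrite gact_castr // HDx raddf0.
  have := gamma_coord_kills eq_n3 eq_k3 j3_ge0 eI01 e'01 H_basis Hz gF le_nI q_rep.
  by rewrite gact_castr //; apply: gcast_eq0; rewrite eq_z.
have eq_deg : gk p i e + j3 + j' = gk p i e + j by rewrite -addrA eq_j.
have eq_lvl : gm i j3 e + 1 - j' = gm i j e + 1 by rewrite -eq_j /gm; lia.
have := congF_cast eq_deg eq_lvl (congF_mulr h4 D G_Eb).
rewrite gmulA gcastK; last by rewrite addrA.
rewrite (gmul_castl _ _ eq_k3) gcastK -?eq_k3 //.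
rewrite -(gmul_castr G _ eq_j) => bEbD.
rewrite (basis_act_cong h8 i_ge0 e01 G_basis hu x j_ge0 (congF_trans bgHD (congF_sym bEbD))).
by rewrite (gact_castl _ _ eq_j) gactA EbDx !raddf0.
Qed.

Variables (da : int) (G2 : A da) (G2F : G2 \in F (gm i j e) da) (G2x : gact G2 x = 0).
Hypothesis m_ge0 : 0 <= gm i j e.

(* By (E8), gamma(a (x) [G2]) = [G] (x) b for every b with G b = a G2 modulo F_{m+1};
   lift_kills a says that a then kills [G2] (x) x in Phi M. *)
Definition lift_kills D (a : A D) := forall b : A j,
  congF (gm i j e + 1) (gmul G b) (gcast A (gmul a G2)) -> gact b x = 0.

Lemma lift_kills_prod I eI J D (g : A (gk p I eI)) (c : A J)
    (eq_D : D = gk p I eI + J) (eq_Dda : D + da = gk p i e + j) :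
  eI \in [:: 0; 1] -> g \in F (gn I eI) (gk p I eI) ->
  da + gm i j e <= gm I J eI -> lift_kills (gcast A (gmul g c) : A D).
Proof.
move=> eI01 gF le_lvl b bgc.
have eq_T : gk p I eI + (J + da) = gk p i e + j by rewrite addrA -eq_D.
rewrite gmul_castl // gcastK in bgc; last by rewrite eq_D.
rewrite gmulA gcastK in bgc; last by rewrite addrA.
set u := gmul c G2 in bgc.
have uF : u \in F (gm i j e) (J + da) by apply: h3.
have [uF1 | [i' e' j' i'_ge0 j'_ge0 e'01 eq_m eq_k]] := gF_succ_or_E8 p_ge2 h6 m_ge0 uF.
  by apply: basis_mul_kills bgc _; apply: gF_cast eq_T (erefl _) _; apply: h3.
have [H [muH H_basis]] := quot_basis_of_dim1 (h7 i'_ge0 e'01).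
have [D' HD'] := basis_lift h4 h8 i'_ge0 e'01 H_basis j'_ge0 (gF_cast eq_k eq_m uF).
rewrite -eq_m in HD'.
have HD'x : gact H (gact D' x) = 0.
  have := congF_act hu x HD'.
  rewrite gactA (gact_castl _ _ eq_k) /u gactA G2x !raddf0 => /gcast_eq0; apply.
  by rewrite addrA.
have eq_kk : gk p I eI + gk p i' e' + j' = gk p i e + j by rewrite -addrA -eq_k.
have le_n : gk p i' e' + gn i' e' <= gn I eI.
  by move: le_lvl eq_k eq_m; rewrite /gn /gm; lia.
apply: (basis_prod_kills eq_m eq_kk i'_ge0 e'01 eI01 j'_ge0 H_basis gF le_n HD'x).
apply: congF_trans bgc _; rewrite gmulA gcastK; last by rewrite addrA.
have := congF_cast (etrans (addrA _ _ _) eq_kk) (erefl _) (congF_mull h3 g (congF_sym HD')).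
by rewrite (gmul_castr _ _ eq_k) gcastK // eq_k.
Qed.

Section LiftDegree.
Variables (D : int) (eq_Dda : D + da = gk p i e + j).

Lemma lift_exists (a : A D) :
  exists b : A j, congF (gm i j e + 1) (gmul G b) (gcast A (gmul a G2)).
Proof.
apply: (basis_lift h4 h8 i_ge0 e01 G_basis j_ge0).
by apply: gF_cast eq_Dda (erefl _) _; apply: h3.
Qed.

Lemma lift_kills0 : lift_kills (0 : A D).
Proof. by move=> b bG; apply: basis_mul_kills bG _; rewrite gmul0l raddf0 rpred0. Qed.

Lemma lift_killsD (a1 a2 : A D) :
  lift_kills a1 -> lift_kills a2 -> lift_kills (a1 + a2).
Proof.
move=> a1_kills a2_kills b ba.
have [b1 ba1] := lift_exists a1; have [b2 ba2] := lift_exists a2.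
have bb : congF (gm i j e + 1) (gmul G b) (gmul G (b1 + b2)).
  apply: congF_trans ba _; rewrite raddfD gmul_addl raddfD.
  by apply: congFD; apply: congF_sym.
rewrite (basis_act_cong h8 i_ge0 e01 G_basis hu x j_ge0 bb) gact_addl.
by rewrite (a1_kills _ ba1) (a2_kills _ ba2) addr0.
Qed.

Lemma lift_kills_sum (T : eqType) (s : seq T) (f : T -> A D) :
  {in s, forall t, lift_kills (f t)} -> lift_kills (\sum_(t <- s) f t).
Proof.
elim: s => [|t s IH] f_kills; first by rewrite big_nil; apply: lift_kills0.
rewrite big_cons; apply: lift_killsD; first by apply: f_kills; rewrite mem_head.
by apply: IH => u us; apply: f_kills; rewrite inE us orbT.
Qed.

Hypothesis lvl_ge0 : 0 <= da + gm i j e.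

Lemma lift_kills_gF_step L (a : A D) : da + gm i j e <= L -> a \in F L D ->
  (forall a' : A D, a' \in F (L + 1) D -> lift_kills a') -> lift_kills a.
Proof.
move=> le_L aL IH; have L_ge0 : 0 <= L by lia.
have [aL1 | [I eI J I_ge0 J_ge0 eI01 eq_L eq_D]] := gF_succ_or_E8 p_ge2 h6 L_ge0 aL.
  exact: IH.
pose a' := gcast A a : A (gk p I eI + J).
have [q qF a'_q] := (h8 I_ge0 J_ge0 eI01).2 a' (gF_cast eq_D eq_L aL).
have -> : a = gcast A a' by rewrite gcastK ?gcastE.
rewrite -[a'](subrK (\sum_(gc <- q) gmul gc.1 gc.2)) raddfD /=.
apply: lift_killsD; first by apply: IH; apply: gF_cast _ _ a'_q; rewrite -?eq_L.
rewrite raddf_sum /=; apply: lift_kills_sum => gc /(allP qF) gcF.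
by apply: (lift_kills_prod eq_D eq_Dda eI01 gcF); rewrite -eq_L.
Qed.

Lemma lift_kills_gF (a : A D) : a \in F (da + gm i j e) D -> lift_kills a.
Proof.
(* descending induction on the filtration degree, which is bounded by gF_eq0 *)
suff lvl_kills n : forall L, da + gm i j e <= L -> D + 1 - L <= n%:Z ->
    forall a : A D, a \in F L D -> lift_kills a.
  move=> aF; have le_n : D + 1 - (da + gm i j e) <= absz (D + 1 - (da + gm i j e))%R by lia.
  exact: lvl_kills (lexx _) le_n a aF.
elim: n => [|n IH] L le_L le_n a' a'F.
  by rewrite (gF_eq0 p_ge2 h2 h6 _ _ a'F); [apply: lift_kills0 | lia | lia].
by apply: (lift_kills_gF_step le_L a'F) => a'' a''F; apply: (IH (L + 1)) a''F; lia.
Qed.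

End LiftDegree.

End FixedBasis.

Lemma contract_flatten k j da m (phi : A k -> K) (s : seq (A da * M m))
    (ts : seq (seq (A k * A j))) (R : A da * M m -> seq (A k * A j) -> bool)
    (f : A da * M m -> M (j + m)) :
  all2 R s ts ->
  {in s, forall gx t, R gx t -> \sum_(hc <- t) phi hc.1 *: gact hc.2 gx.2 = f gx} ->
  \sum_(vw <- flatten [seq [seq (hc.1, gact hc.2 st.1.2) | hc <- st.2] | st <- zip s ts])
     phi vw.1 *: vw.2 = \sum_(gx <- s) f gx.
Proof.
elim: s ts => [|gx s IH] [|t ts] //=; first by rewrite !big_nil.
move=> /andP[gx_t s_ts] f_eq.
rewrite big_cat big_map big_cons (f_eq gx (mem_head _ _) t gx_t); congr (_ + _).
by apply: IH => // gx' gx's; apply: f_eq; rewrite inE gx's orbT.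
Qed.

Lemma desusp_ker_unstable_of : desusp_ker_unstable p F M.
Proof.
move=> i j e i_ge0 j_ge0 e01 s sF s_ker a aF ts ts_rep phi phi_funcl.
rewrite inE; apply/eqP.
have [m_lt0 | m_ge0] := ltP (gm i j e) 0.
  rewrite (contract_flatten (f := fun => 0) ts_rep) ?big1 // => gx _ t _.
  by rewrite big1 // => hc _; rewrite (unstable_neg hu h1 gx.2 m_lt0) raddf0 scaler0.
have [G [mu G_basis]] := quot_basis_of_dim1 (h7 i_ge0 e01).
have eq_n0 := gn_div2 (gm i j e); have e001 := mod2_01 (gm i j e).
have i0_ge0 : 0 <= (gm i j e %/ 2)%Z by rewrite divz_ge0.
set i0 := (gm i j e %/ 2)%Z in eq_n0 e001 i0_ge0; set e0 := (gm i j e %% 2)%Z in eq_n0 e001.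
have eq_da := gda_gk p j_ge0 e01 e001 eq_n0.
have [G2 [c [G2F _ c_cong _]]] : exists G2 c, quot_basis F (gm i j e) (gda p i j e) G2 c.
  by apply: quot_basis_of_dim1; rewrite -eq_n0 eq_da; apply: h7.
pose x := \sum_(gx <- s) c gx.1 *: gx.2.
have G2x : gact G2 x = 0.
  rewrite raddf_sum -[RHS]s_ker /=; apply: eq_big_seq => gx /(allP sF) gxF.
  by rewrite linearZ /= -gactZl (congF_act hu _ (c_cong _ gxF)).
have eq_lvl : P * (gm i j e - gkappa j e) + 2 * gkappa j e = gda p i j e + gm i j e.
  by rewrite /gda; ring.
have lvl_ge0 : 0 <= gda p i j e + gm i j e.
  by rewrite eq_da /gk; move: e001 => /mem01; nia.
have [b b_aG2] := lift_exists i_ge0 e01 G_basis j_ge0 G2F (gdb_add_gda p i j e) a.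
rewrite eq_lvl in aF.
have bx := lift_kills_gF i_ge0 e01 G_basis j_ge0 G2F G2x m_ge0 (gdb_add_gda p i j e) lvl_ge0 aF b_aG2.
rewrite (contract_flatten (f := fun gx => phi G *: gact b (c gx.1 *: gx.2)) ts_rep).
  by rewrite -scaler_sumr -raddf_sum /= -/x bx scaler0.
move=> gx /(allP sF) gxF t t_rep.
exact: (gamma_rep_contract i_ge0 e01 G_basis j_ge0 gx.2 phi_funcl (c_cong _ gxF) b_aG2 t_rep).
Qed.

End KernelDesuspension.

Theorem lemma3p8 (K : fieldType) (p : nat) (A : galg K) (F : gfilt A)
    (M : gmod A) :
  p \in [pchar K]%R ->
  E1 F -> E2 F -> E3 F -> E4 F -> E6 p F -> E7 p F -> E8 p F ->
  unstable F M ->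
  desusp_coker_unstable p F M /\ (E9 p F -> desusp_ker_unstable p F M).
Proof.
move=> pK h1 h2 h3 h4 h6 h7 h8 hu.
have p_ge2 : 2 <= p%:Z by have := prime_gt1 (pcharf_prime pK); lia.
split; first by move=> n k a x; apply: im_lambda_act.
by move=> h9; apply: desusp_ker_unstable_of.
Qed.
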